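(* Let $n\ge2$, let $a_1,\dots,a_n$ be real numbers, $C(t)=\sum_{j=1}^n a_j\cos jt$, $S(t)=\sum_{j=1}^n a_j\sin jt$, and suppose $S(t_1)=0$ with $t_1\in(0,\pi)$. Define $a^{(1)}_1,\dots,a^{(1)}_{n-1}$ by setting $a^{(1)}_n=a^{(1)}_{n+1}=0$ and, for $k=n,n-1,\dots,2$ (in this order), $$a^{(1)}_{k-1}=2a_k+2\cos t_1\, a^{(1)}_k-a^{(1)}_{k+1}.$$ Then $C(t_1)=-\dfrac{a^{(1)}_1}{2}$.
   Context: The recursion expresses $a^{(1)}_1,\dots,a^{(1)}_{n-1}$ uniquely in terms of $a_2,\dots,a_n$ and $\cos t_1$; it is equivalent to the equations $a_k=\tfrac12a^{(1)}_{k-1}-\cos t_1\,a^{(1)}_k+\tfrac12a^{(1)}_{k+1}$ for $k=2,\dots,n$ (with $a^{(1)}_n=a^{(1)}_{n+1}=0$). *)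

From Stdlib Require Import Reals.
Open Scope R_scope.

Definition Csum (n : nat) (a : nat -> R) (t : R) : R :=
  sum_f 1 n (fun j => a j * cos (INR j * t)).

Definition Ssum (n : nat) (a : nat -> R) (t : R) : R :=
  sum_f 1 n (fun j => a j * sin (INR j * t)).

(* Downward recursion with a1_n = a1_{n+1} = 0 and, for k = n, ..., 2,
   a1_{k-1} = 2 a_k + 2 c a1_k - a1_{k+1}.
   rec_pair n a c m = (a1_{n-m}, a1_{n-m+1}) for m <= n-1. *)
Fixpoint rec_pair (n : nat) (a : nat -> R) (c : R) (m : nat) : R * R :=
  match m with
  | O => (0, 0)
  | S m' => let (x, y) := rec_pair n a c m' in
            (2 * a (n - m')%nat + 2 * c * x - y, x)
  end.

(* a1 k for 1 <= k <= n+1 (k = n, n+1 give 0). *)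
Definition a1 (n : nat) (a : nat -> R) (c : R) (k : nat) : R :=
  fst (rec_pair n a c (n - k)%nat).

(** Summation by parts against any sequence [w] with
    [w (j+2) + w j = 2 c w (j+1)] telescopes the recursion defining the
    [a1 k]: the whole sum [sum_j a_j w_j] collapses to [(b0 w_1 - b1 w_0) / 2],
    where [b0] is one further step of the recursion and [b1 = a1 1].  Both
    [cos (j t)] and [sin (j t)] satisfy the recurrence with [c = cos t];
    as [sin 0 = 0] and [sin t <> 0], the vanishing of [S(t)] forces [b0 = 0],
    and then [C(t) = - b1 / 2]. *)
From Stdlib Require Import Reals Lra Lia.
Open Scope R_scope.

Lemma sum_f_first (s n : nat) (f : nat -> R) : (s < n)%nat ->
  sum_f s n f = f s + sum_f (S s) n f.
Proof.
  intros Hsn. unfold sum_f.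
  replace (n - s)%nat with (S (n - S s)) by lia.
  rewrite decomp_sum by lia. simpl pred. f_equal.
  apply sum_eq. intros i _. f_equal. lia.
Qed.

Lemma sum_f_single (n : nat) (f : nat -> R) : sum_f n n f = f n.
Proof. unfold sum_f. rewrite Nat.sub_diag. simpl. f_equal; lia. Qed.

Lemma rec_pair_S (n : nat) (a : nat -> R) (c : R) (m : nat) :
  rec_pair n a c (S m) =
    (2 * a (n - m)%nat + 2 * c * fst (rec_pair n a c m) - snd (rec_pair n a c m),
     fst (rec_pair n a c m)).
Proof. simpl. now destruct (rec_pair n a c m). Qed.

Lemma cos_mult_recurrence (t : R) (j : nat) :
  cos (INR (S (S j)) * t) + cos (INR j * t) = 2 * cos t * cos (INR (S j) * t).
Proof.
  rewrite !S_INR.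
  replace ((INR j + 1 + 1) * t) with ((INR j + 1) * t + t) by ring.
  replace (INR j * t) with ((INR j + 1) * t - t) by ring.
  rewrite cos_plus, cos_minus. ring.
Qed.

Lemma sin_mult_recurrence (t : R) (j : nat) :
  sin (INR (S (S j)) * t) + sin (INR j * t) = 2 * cos t * sin (INR (S j) * t).
Proof.
  rewrite !S_INR.
  replace ((INR j + 1 + 1) * t) with ((INR j + 1) * t + t) by ring.
  replace (INR j * t) with ((INR j + 1) * t - t) by ring.
  rewrite sin_plus, sin_minus. ring.
Qed.

Section SummationByParts.

Variables (n : nat) (a : nat -> R) (c : R) (w : nat -> R).
Hypothesis w_recurrence : forall j, w (S (S j)) + w j = 2 * c * w (S j).

Lemma rec_pair_tail_sum (m : nat) : (1 <= m <= n)%nat ->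
  sum_f (S (n - m)) n (fun j => a j * w j) =
    (fst (rec_pair n a c m) * w (S (n - m))
     - snd (rec_pair n a c m) * w (n - m)%nat) / 2.
Proof.
  induction m as [|m IH]; intros Hm; [lia|].
  rewrite rec_pair_S; cbn [fst snd].
  destruct m as [|m].
  - simpl. rewrite Nat.sub_0_r. replace (S (n - 1)) with n by lia.
    rewrite sum_f_single. lra.
  - replace (S (n - S (S m))) with (n - S m)%nat by lia.
    rewrite sum_f_first, IH by lia.
    replace (n - S m)%nat with (S (n - S (S m))) by lia.
    set (k := (n - S (S m))%nat).
    pose proof (w_recurrence k) as Hw.
    set (x := fst (rec_pair n a c (S m))) in *.
    set (y := snd (rec_pair n a c (S m))) in *.
    replace (w (S (S k))) with (2 * c * w (S k) - w k) by lra.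
    field.
Qed.

Lemma rec_pair_full_sum : (1 <= n)%nat ->
  sum_f 1 n (fun j => a j * w j) =
    (fst (rec_pair n a c n) * w 1%nat - snd (rec_pair n a c n) * w 0%nat) / 2.
Proof.
  intros Hn. pose proof (rec_pair_tail_sum n ltac:(lia)) as Hsum.
  now rewrite Nat.sub_diag in Hsum.
Qed.

End SummationByParts.

Lemma a1_one (n : nat) (a : nat -> R) (c : R) : (1 <= n)%nat ->
  a1 n a c 1 = snd (rec_pair n a c n).
Proof.
  intros Hn. unfold a1.
  replace n with (S (n - 1)) at 4 by lia.
  now rewrite rec_pair_S.
Qed.

Theorem corollary1 (n : nat) (a : nat -> R) (t1 : R) :
  (2 <= n)%nat ->
  0 < t1 < PI ->
  Ssum n a t1 = 0 ->
  Csum n a t1 = - (a1 n a (cos t1) 1%nat) / 2.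
Proof.
  intros Hn Ht HS.
  unfold Csum, Ssum in *.
  rewrite (rec_pair_full_sum n a (cos t1) _ (sin_mult_recurrence t1)) in HS by lia.
  rewrite (rec_pair_full_sum n a (cos t1) _ (cos_mult_recurrence t1)) by lia.
  rewrite a1_one by lia.
  assert (Hsin : sin t1 <> 0) by (apply Rgt_not_eq, sin_gt_0; lra).
  simpl INR in *. rewrite !Rmult_1_l, !Rmult_0_l, sin_0, cos_0 in *.
  assert (Hb0 : fst (rec_pair n a (cos t1) n) = 0).
  { apply (Rmult_eq_reg_r (sin t1)); [lra | exact Hsin]. }
  rewrite Hb0. lra.
Qed.
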